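(* For every $F\in\mathbb{N}^5\setminus\{0\}$, $$\sqrt{2}^{\,\|F-1\|}\le N(F).$$
   Context: $\mathbb{N}=\{0,1,2,\dots\}$. A GNS is a submonoid $S\subseteq\mathbb{N}^d$ with finite complement $\mathcal{H}(S)=\mathbb{N}^d\setminus S$. A Frobenius GNS with Frobenius gap $F$ is a GNS such that $F$ is the unique maximal element of $\mathcal{H}(S)$ for the natural partial order. $N(F)$ is the number of Frobenius GNS $S\subseteq\mathbb{N}^d$ (here $d=5$) with Frobenius gap $F$. $\|F-1\|=\prod_{i=1}^5F^{(i)}$. *)

From HB Require Import structures.
From mathcomp Require Import all_boot all_order all_algebra.
From mathcomp Require Import boolp classical_sets cardinality.
Set Implicit Arguments. Unset Strict Implicit. Unset Printing Implicit Defensive.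
Import Order.TTheory GRing.Theory Num.Theory.
Local Open Scope classical_set_scope.
Local Open Scope card_scope.

Definition pt (d : nat) := 'I_d -> nat.
Definition pzero {d} : pt d := fun _ => 0%N.
Definition padd {d} (x y : pt d) : pt d := fun i => (x i + y i)%N.
Definition ple {d} (x y : pt d) : Prop := forall i, (x i <= y i)%N.

Definition is_submonoid {d} (S : set (pt d)) : Prop :=
  S pzero /\ (forall x y, S x -> S y -> S (padd x y)).

Definition holes {d} (S : set (pt d)) : set (pt d) := ~` S.

Definition GNS {d} (S : set (pt d)) : Prop :=
  is_submonoid S /\ finite_set (holes S).

Definition is_maximal {d} (A : set (pt d)) (x : pt d) : Prop :=
  A x /\ (forall y, A y -> ple x y -> y = x).

Definition FrobeniusGNS {d} (F : pt d) (S : set (pt d)) : Prop :=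
  GNS S /\ is_maximal (holes S) F /\
  (forall h, is_maximal (holes S) h -> h = F).

Definition N_is {d} (F : pt d) (n : nat) : Prop :=
  [set S : set (pt d) | FrobeniusGNS F S] #= `I_n.

(* Fix F in N^d (d >= 2), F <> 0, and call U the set of points x <= F whose
   first coordinate exceeds F_0 / 2.  The sum of two points of U is not
   below F.  Hence, for every subset G of U \ {F}, the set
       S_G = {x | not x <= F} u {0} u G
   is a submonoid of N^d whose holes all lie below F and include F: it is a
   Frobenius GNS with Frobenius gap F, and G is recovered from S_G.  So
   N(F) >= 2^(|U| - 1), while |U| = ceil(F_0 / 2) * prod_{i > 0} (F_i + 1),
   which yields 2 (|U| - 1) >= prod_i F_i and the bound sqrt 2 ^ prod F <= N(F). *)

From mathcomp Require Import all_boot all_order all_algebra.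
From mathcomp Require Import boolp classical_sets cardinality.
From mathcomp Require Import finmap zify.
Import Order.TTheory GRing.Theory Num.Theory.

Set Implicit Arguments.
Unset Strict Implicit.
Unset Printing Implicit Defensive.

Local Open Scope classical_set_scope.
Local Open Scope card_scope.

Section NaturalOrder.
Variable d : nat.
Implicit Types (x y z : pt d) (A : set (pt d)).

Lemma ple_refl x : ple x x.
Proof. by []. Qed.

Lemma ple_trans x y z : ple x y -> ple y z -> ple x z.
Proof. by move=> xy yz i; apply: leq_trans (xy i) (yz i). Qed.

Lemma ple_anti x y : ple x y -> ple y x -> x = y.
Proof. by move=> xy yx; apply: funext => i; apply/eqP; rewrite eqn_leq xy yx. Qed.

Definition psum x := (\sum_(i < d) x i)%N.

Lemma psum_lt x y : ple x y -> x <> y -> (psum x < psum y)%N.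
Proof.
move=> xy ne_xy; have [xy_i|eq_xy] := pselect (exists i, x i <> y i); last first.
  by case: ne_xy; apply: funext => i; apply: contrapT => ne; apply: eq_xy; exists i.
case: xy_i => i ne_i.
have lt_i : (x i < y i)%N by rewrite ltn_neqAle xy andbT; apply/eqP.
rewrite /psum (bigD1 i) //= [X in (_ < X)%N](bigD1 i) //=.
by rewrite -addSn leq_add // leq_sum.
Qed.

Lemma finite_below_maximal A x :
  finite_set A -> A x -> exists2 m, is_maximal A m & ple x m.
Proof.
move=> /finite_fsetP[X defA].
pose B := (\max_(y <- X) psum y)%N.
have psum_le y : A y -> (psum y <= B)%N.
  by rewrite defA => Xy; apply: leq_bigmax_seq.
move: x; suff: forall n x, (B - psum x)%N = n -> A x ->
    exists2 m, is_maximal A m & ple x m by move=> main x; apply: main.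
elim/ltn_ind => n IH x def_n Ax.
have [max_x|not_max] := pselect (is_maximal A x); first by exists x.
have [y [Ay xy ne_yx]] : exists y, [/\ A y, ple x y & y <> x].
  apply: contrapT => no_y; apply: not_max; split=> // y Ay xy.
  by apply: contrapT => ne; apply: no_y; exists y.
have lt_xy := psum_lt xy (nesym ne_yx).
have [|m max_m ym] := IH (B - psum y)%N _ y erefl Ay.
  by have := psum_le y Ay; lia.
by exists m => //; apply: ple_trans ym.
Qed.

Lemma frobenius_hole_le F S x : FrobeniusGNS F S -> ~ S x -> ple x F.
Proof.
move=> [[_ fin_holes] [_ uniq_max]] Sx.
have [m max_m xm] := finite_below_maximal fin_holes Sx.
by rewrite -(uniq_max m max_m).
Qed.

End NaturalOrder.

Section Box.
Variables (d : nat) (F : pt d).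

Definition box_bound := (\max_(i < d) F i)%N.
Definition box := {ffun 'I_d -> 'I_box_bound.+1}.

Definition emb (t : box) : pt d := fun i => val (t i).
Definition to_box (x : pt d) : box := [ffun i => inord (x i)].

Lemma emb_inj : injective emb.
Proof.
move=> t u e; apply/ffunP => i; apply: val_inj.
exact: (congr1 (fun x : pt d => x i) e).
Qed.

Lemma emb_to_box x : ple x F -> emb (to_box x) = x.
Proof.
move=> xF; apply: funext => i; rewrite /emb ffunE /= inordK //.
by rewrite ltnS; apply: leq_trans (xF i) _; apply: leq_bigmax.
Qed.

Lemma finite_below : finite_set [set x | ple x F].
Proof.
apply: (sub_finite_set (B := emb @` setT)); last exact/finite_image/finite_finset.
by move=> x xF; exists (to_box x); rewrite ?emb_to_box.
Qed.

(* N(F) is well defined: a Frobenius GNS with gap F is determined by its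
   holes, which are points of the box. *)
Lemma frobenius_finite : finite_set [set S : set (pt d) | FrobeniusGNS F S].
Proof.
pose of_holes (H : {set box}) : set (pt d) :=
  [set x | forall t, t \in H -> x <> emb t].
apply: (sub_finite_set (B := of_holes @` setT)); last exact/finite_image/finite_finset.
move=> S frobS; exists [set t : box | `[< ~ S (emb t) >]]%SET => //.
apply: funext => x; apply: propext; split=> [notH|Sx t]; last first.
  by rewrite inE => /asboolP nSt ex; apply: nSt; rewrite -ex.
apply: contrapT => Sx; have xF := frobenius_hole_le frobS Sx.
by apply: (notH (to_box x)); rewrite ?inE ?emb_to_box //; apply/asboolP.
Qed.

End Box.

Lemma card_ord_interval n lo hi : (hi < n)%N ->
  #|[pred k : 'I_n | lo <= k <= hi]| = (hi.+1 - lo)%N.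
Proof.
move=> hi_lt; rewrite -sum1_card.
rewrite (eq_bigl (fun k : 'I_n => (lo <= k) && (k < hi.+1))) //.
rewrite -(big_ord_widen_cond _ (fun k => lo <= k) (fun _ => 1%N)) //.
rewrite (eq_bigl (fun k : 'I_hi.+1 => xpredT k && (lo <= k))) //.
by rewrite -(big_geq_mkord _ _ xpredT (fun _ => 1%N)) sum_nat_const_nat muln1.
Qed.

Lemma card_ffun_family d n (P : 'I_d -> pred 'I_n) :
  #|[set t : {ffun 'I_d -> 'I_n} | [forall i, P i (t i)]]%SET| =
  (\prod_(i < d) #|P i|)%N.
Proof.
rewrite -(@eq_card _ (family P)) => [|t]; last by rewrite inE; apply/familyP/forallP.
by rewrite card_family foldrE big_map big_enum.
Qed.

Lemma finset_inj_card_le (T : finType) (A : {set T}) U (B : set U) (f : T -> U) n :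
  B #= `I_n -> {in A &, injective f} -> {in A, forall t, B (f t)} ->
  (#|A| <= n)%N.
Proof.
move=> Bn f_inj fAB; rewrite -card_le_II -(card_le_eqr Bn) (card_le_eql card_II).
pose g (i : 'I_#|A|) := f (enum_val i).
have g_inj : {in [set: 'I_#|A|] &, injective g}.
  by move=> i j _ _ /f_inj e; apply/enum_val_inj/e; apply: enum_valP.
rewrite -(card_le_eql (inj_card_eq g_inj)); apply: subset_card_le.
by move=> _ [i _ <-]; apply/fAB/enum_valP.
Qed.

Section Construction.
Variables (d : nat) (F : pt d.+1).
Hypothesis F_neq0 : F <> pzero.

Definition upper_half : {set box F} :=
  [set t : box F | [forall i, val (t i) <= F i] && (F ord0 %/ 2 < t ord0)]%SET.

Definition free_points : {set box F} := (upper_half :\ to_box F F)%SET.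

Lemma free_points_sub : (free_points \subset upper_half)%SET.
Proof. exact: subsetDl. Qed.

Lemma upper_half_le t : t \in upper_half -> ple (emb t) F.
Proof. by rewrite inE => /andP[/forallP tF _] i; apply: tF. Qed.

Lemma upper_half_high t : t \in upper_half -> (F ord0 < 2 * emb t ord0)%N.
Proof. by rewrite inE => /andP[_]; rewrite /emb /=; lia. Qed.

Definition monoid_of (G : {set box F}) : set (pt d.+1) :=
  [set x | ~ ple x F \/ x = pzero \/ exists2 t, t \in G & x = emb t].

Lemma not_ple_addr x y : ~ ple x F -> ~ ple (padd x y) F.
Proof.
by move=> xF xyF; apply: xF => i; apply: leq_trans (xyF i); apply: leq_addr.
Qed.

(* S_G is a submonoid: the sum of two points of the upper half is too large
   in its first coordinate to lie below F. *)
Lemma monoid_of_submonoid (G : {set box F}) :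
  (G \subset upper_half)%SET -> is_submonoid (monoid_of G).
Proof.
move=> /fintype.subsetP GU; split; first by right; left.
have paddC x y : padd x y = padd y x by apply: funext => i; apply: addnC.
have padd0 x : padd x pzero = x by apply: funext => i; apply: addn0.
move=> x y [xF|[->|[t Gt ->]]] Sy; first by left; apply: not_ple_addr.
  by rewrite paddC padd0.
case: Sy => [yF|[->|[u Gu ->]]].
- by left; rewrite paddC; apply: not_ple_addr.
- by right; right; exists t; rewrite ?padd0.
- left => sumF; have := sumF ord0; rewrite /padd.
  by have := upper_half_high (GU t Gt); have := upper_half_high (GU u Gu); lia.
Qed.

Lemma monoid_of_frobenius (G : {set box F}) :
  (G \subset free_points)%SET -> FrobeniusGNS F (monoid_of G).
Proof.
move=> GL; have GU := fintype.subset_trans GL free_points_sub.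
have hole_le x : ~ monoid_of G x -> ple x F.
  by move=> Sx; apply: contrapT => xF; apply: Sx; left.
have F_hole : ~ monoid_of G F.
  case=> [nFF|[//|[t Gt eF]]]; first exact: nFF (ple_refl F).
  move: (fintype.subsetP GL t Gt); rewrite !inE => /andP[/eqP[]].
  by apply: emb_inj; rewrite emb_to_box.
split; [split|split; [split|]].
- exact: monoid_of_submonoid.
- exact: sub_finite_set hole_le (finite_below F).
- exact: F_hole.
- by move=> y Sy Fy; apply: ple_anti => //; apply: hole_le.
- by move=> h [Sh max_h]; apply/esym/max_h => //; apply: hole_le.
Qed.

(* G is recovered from S_G as the set of its points in the box below F. *)
Lemma monoid_of_inj : {in powerset free_points &, injective monoid_of}.
Proof.
have incl_of_eq (G1 G2 : {set box F}) : (G1 \subset upper_half)%SET ->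
    monoid_of G1 = monoid_of G2 -> (G1 \subset G2)%SET.
  move=> /fintype.subsetP G1U eqS; apply/fintype.subsetP => t G1t.
  have : monoid_of G2 (emb t) by rewrite -eqS; right; right; exists t.
  have tF := upper_half_le (G1U t G1t); have high := upper_half_high (G1U t G1t).
  case=> [/(_ tF)//|[t0|[u G2u /emb_inj ->//]]].
  by move: high; rewrite t0 /pzero muln0 ltn0.
move=> G1 G2; rewrite !inE => /fintype.subset_trans G1U /fintype.subset_trans G2U eqS.
apply/eqP; rewrite finset.eqEsubset.
by rewrite (incl_of_eq G1 G2) ?(incl_of_eq G2 G1) ?G1U ?G2U ?free_points_sub.
Qed.

Lemma frobenius_count_ge n : N_is F n -> (2 ^ #|free_points| <= n)%N.
Proof.
move=> Nn; rewrite -card_powerset.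
apply: finset_inj_card_le Nn monoid_of_inj _ => G.
by rewrite inE; apply: monoid_of_frobenius.
Qed.

Lemma card_upper_half :
  #|upper_half| = ((F ord0 - F ord0 %/ 2) * \prod_(i < d) (F (lift ord0 i)).+1)%N.
Proof.
have F_le i : (F i < (box_bound F).+1)%N by rewrite ltnS; apply: leq_bigmax.
pose P i := [pred k : 'I_(box_bound F).+1 |
  ((i == ord0) ==> (F ord0 %/ 2 < k)) && (k <= F i)].
rewrite -(@eq_card _ [set t : box F | [forall i, P i (t i)]]%SET); last first.
  move=> t; rewrite !inE /P; apply/forallP/andP => [tP|[/forallP tF t0] i].
    split; first by apply/forallP => i; have /andP[] := tP i.
    by have /andP[/implyP-> //] := tP ord0.
  by rewrite /= tF andbT; apply/implyP => /eqP ->.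
rewrite (card_ffun_family P) big_ord_recl; congr (_ * _)%N.
  rewrite (@eq_card _ _ [pred k : 'I__ | (F ord0 %/ 2).+1 <= k <= F ord0]) //.
  by rewrite card_ord_interval ?F_le ?subSS.
apply: eq_bigr => i _.
rewrite (@eq_card _ _ [pred k : 'I__ | 0 <= k <= F (lift ord0 i)]) //.
by rewrite card_ord_interval ?F_le ?subn0.
Qed.

End Construction.

Lemma prod_lt_prod_succ n (a : 'I_n.+1 -> nat) :
  (\prod_(i < n.+1) a i < \prod_(i < n.+1) (a i).+1)%N.
Proof.
rewrite !big_ord_recl mulSn.
set P := (\prod_(i < n) a _)%N; set Q := (\prod_(i < n) (a _).+1)%N.
have le_PQ : (P <= Q)%N by apply: leq_prod => i _; apply: leqnSn.
have Q_gt0 : (0 < Q)%N by rewrite prodn_gt0.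
by rewrite addnC -addn1 leq_add // leq_mul.
Qed.

Lemma half_prod_le a P Q k :
  (P < Q)%N -> ((a - a %/ 2) * Q <= k + 1)%N -> (a * P <= 2 * k)%N.
Proof.
move=> PQ cQk; have [-> //|a_gt0] := posnP a.
have half : (a <= 2 * (a - a %/ 2))%N by lia.
have : (a * P <= 2 * (a - a %/ 2) * P)%N by apply: leq_mul.
have : ((a - a %/ 2) * P.+1 <= (a - a %/ 2) * Q)%N by apply: leq_mul.
nia.
Qed.

Lemma prod_le_free_points d (F : pt d.+2) :
  (\prod_(i < d.+2) F i <= 2 * #|free_points F|)%N.
Proof.
rewrite big_ord_recl; apply: half_prod_le (prod_lt_prod_succ _) _.
by rewrite -card_upper_half (cardsD1 (to_box F F)) addnC leq_add2l leq_b1.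
Qed.

Lemma sqrt2_pow_le (R : rcfType) (p k n : nat) :
  (p <= 2 * k)%N -> (2 ^ k <= n)%N -> (Num.sqrt (2%:R : R) ^+ p <= n%:R)%R.
Proof.
move=> pk kn; have sqrt2_ge1 : (1 <= Num.sqrt (2%:R : R))%R.
  by rewrite -{1}(sqrtr1 R) ler_sqrt ?ler0n // ler1n.
apply: (le_trans (ler_weXn2l sqrt2_ge1 pk)).
by rewrite exprM sqr_sqrtr ?ler0n // -natrX ler_nat.
Qed.

Local Open Scope ring_scope.

Theorem proposition5p3 (R : rcfType) (F : pt 5) :
  F <> pzero ->
  exists n : nat, N_is F n /\
    (Num.sqrt (2%:R : R)) ^+ (\prod_(i < 5) F i)%N <= n%:R.
Proof.
move=> F_neq0.
have [n Nn] := (finite_setP _).1 (frobenius_finite F).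
exists n; split=> //.
exact: sqrt2_pow_le (prod_le_free_points F) (frobenius_count_ge F_neq0 Nn).
Qed.
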